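(* Let $f$ be a homogeneous polynomial of degree $d\ge 2$ on $\mathbb{C}^2$. Then the holomorphic Hessian metric $-\frac{1}{d(d-1)}\partial^2 f/\partial x_i\partial x_j$ is flat on the open set where the Hessian determinant $\det(\partial^2 f/\partial x_i\partial x_j)$ is nonzero.
   Context: Over $\mathbb{C}$, a (holomorphic) metric means a nondegenerate symmetric complex-bilinear form on the holomorphic tangent bundle; its Levi-Civita connection, curvature tensor and sectional curvatures are defined by the same algebraic formulas as for real pseudo-Riemannian metrics, and flat means the curvature tensor vanishes. *)

(* Holomorphic derivatives are the
   MathComp-Analysis directional derivatives over the scalar field C itself
   (so h -> 0 in C: complex differentiation when C = R[i]). *)
From HB Require Import structures.
From mathcomp Require Import all_boot all_order all_algebra.
From mathcomp Require Import all_classical all_reals all_analysis.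
From mathcomp Require Import complex.
Set Implicit Arguments. Unset Strict Implicit. Unset Printing Implicit Defensive.
Import Order.TTheory GRing.Theory Num.Theory.
Import numFieldNormedType.Exports.
Local Open Scope ring_scope.

Definition pd (C : numFieldType) (f : 'rV[C]_2 -> C) (i : 'I_2) (x : 'rV[C]_2) : C :=
  'D_(delta_mx 0 i) f x.

Definition hom2 (C : numFieldType) (d : nat) (a : 'I_d.+1 -> C) (x : 'rV[C]_2) : C :=
  \sum_(k < d.+1) a k * x 0 0 ^+ k * x 0 1 ^+ (d - k).

Definition hessian (C : numFieldType) (f : 'rV[C]_2 -> C) (x : 'rV[C]_2) : 'M[C]_2 :=
  \matrix_(i, j) pd (pd f j) i x.

Definition metric_mx (C : numFieldType) (g : 'I_2 -> 'I_2 -> 'rV[C]_2 -> C)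
  (x : 'rV[C]_2) : 'M[C]_2 := \matrix_(i, j) g i j x.

Definition hessian_metric (C : numFieldType) (d : nat) (f : 'rV[C]_2 -> C) :
  'I_2 -> 'I_2 -> 'rV[C]_2 -> C :=
  fun i j x => - ((d * (d - 1))%:R)^-1 * pd (pd f j) i x.

Definition christoffel (C : numFieldType) (g : 'I_2 -> 'I_2 -> 'rV[C]_2 -> C)
  (k i j : 'I_2) (x : 'rV[C]_2) : C :=
  2^-1 * \sum_(l < 2) (invmx (metric_mx g x)) k l *
           (pd (g j l) i x + pd (g i l) j x - pd (g i j) l x).

(* Riemann curvature tensor R^l_{kij} (components of R(d_i,d_j) d_k):
   d_i Gamma^l_jk - d_j Gamma^l_ik + Gamma^l_im Gamma^m_jk - Gamma^l_jm Gamma^m_ik *)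
Definition curvature (C : numFieldType) (g : 'I_2 -> 'I_2 -> 'rV[C]_2 -> C)
  (l k i j : 'I_2) (x : 'rV[C]_2) : C :=
  pd (christoffel g l j k) i x - pd (christoffel g l i k) j x
  + \sum_(m < 2) (christoffel g l i m x * christoffel g m j k x
                  - christoffel g l j m x * christoffel g m i k x).

Definition flat_on (C : numFieldType) (g : 'I_2 -> 'I_2 -> 'rV[C]_2 -> C)
  (U : 'rV[C]_2 -> Prop) : Prop :=
  forall x, U x -> forall l k i j : 'I_2, curvature g l k i j x = 0.

From HB Require Import structures.
From mathcomp Require Import all_boot all_order all_algebra.
From mathcomp Require Import all_classical all_reals all_analysis.
From mathcomp Require Import complex ring zify.
Set Implicit Arguments. Unset Strict Implicit. Unset Printing Implicit Defensive.
Import Order.TTheory GRing.Theory Num.Theory.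
Import numFieldNormedType.Exports.
Local Open Scope classical_set_scope.
Local Open Scope ring_scope.

(* For a Hessian metric g = c D^2 f the Christoffel matrices are
   Gamma_i = 1/2 g^-1 (d_i g); the fourth derivatives of f cancel in the
   curvature, leaving R(d_i, d_j) = - [Gamma_i, Gamma_j].  When f is homogeneous
   of degree d, Euler's identity for its third derivatives gives
   x_0 Gamma_0 + x_1 Gamma_1 = (d - 2)/2 Id, so for d > 2 the two Christoffel
   matrices commute; for d = 2 they vanish. *)

Lemma ord2P (i : 'I_2) : i = 0 \/ i = 1.
Proof. by case: i => [[|[|n]]] // Hi; [left | right]; apply/val_inj. Qed.

Lemma sum_ord2 (V : nmodType) (F : 'I_2 -> V) : \sum_(i < 2) F i = F 0 + F 1.
Proof. by rewrite big_ord_recl big_ord1; congr (_ + F _); apply/val_inj. Qed.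

Section Matrix2.
Variable R : comRingType.
Implicit Type A : 'M[R]_2.

Lemma det_mx2 A : \det A = A 0 0 * A 1 1 - A 0 1 * A 1 0.
Proof.
rewrite (expand_det_row _ 0) sum_ord2 /cofactor !det_mx11 !mxE /=.
have -> : lift 0 (0 : 'I_1) = 1 :> 'I_2 by apply/val_inj.
have -> : lift 1 (0 : 'I_1) = 0 :> 'I_2 by apply/val_inj.
by rewrite expr0 expr1 !mul1r mulN1r mulrN.
Qed.

Lemma mxtrace_mx2 A : \tr A = A 0 0 + A 1 1.
Proof. by rewrite /mxtrace sum_ord2. Qed.

Lemma adj_mx2 A : \adj A = (\tr A)%:M - A.
Proof.
have lift01 : lift 0 (0 : 'I_1) = 1 :> 'I_2 by apply/val_inj.
have lift10 : lift 1 (0 : 'I_1) = 0 :> 'I_2 by apply/val_inj.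
apply/matrixP => i j; rewrite mxtrace_mx2 !mxE /cofactor det_mx11 !mxE.
by case: (ord2P i) => ->; case: (ord2P j) => -> /=;
  rewrite ?lift01 ?lift10 ?expr0 ?expr1 ?mulr1n ?mulr0n; ring.
Qed.

End Matrix2.

Lemma invmx2 (F : fieldType) (A : 'M[F]_2) :
  \det A != 0 -> invmx A = (\det A)^-1 *: ((\tr A)%:M - A).
Proof. by move=> detA; rewrite /invmx unitmxE unitfE detA adj_mx2. Qed.

Lemma scalar_lincomb_commute (F : fieldType) n (A B : 'M[F]_n.+1) (a b s : F) :
  s != 0 -> a *: A + b *: B = s%:M -> A *m B = B *m A.
Proof.
move=> s0; wlog a0 : a b A B / a != 0 => [hwlog AB | AB].
  have [a0|a0] := eqVneq a 0; last exact: hwlog a0 AB.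
  have b0 : b != 0.
    apply: contra_neq s0 => b0.
    have : s *: (1%:M : 'M[F]_n.+1) = 0 by rewrite scalemx1 -AB a0 b0 !scale0r addr0.
    by move/eqP; rewrite scaler_eq0 (negbTE (matrix_nonzero1 _ _)) orbF => /eqP.
  by apply/esym/(hwlog b 0) => //; rewrite scale0r addr0 -AB a0 scale0r add0r.
have -> : A = a^-1 *: (s%:M - b *: B) by rewrite -AB addrK scalerA mulVf // scale1r.
by rewrite -scalemxAl -scalemxAr mulmxBl mulmxBr scalar_mxC -scalemxAl -scalemxAr.
Qed.

Section Derivatives.
Variable C : numFieldType.
Implicit Types (f : 'rV[C]_2 -> C) (x v : 'rV[C]_2).

Lemma is_derive_coord (j : 'I_2) x v : is_derive x v (fun y : 'rV[C]_2 => y 0 j) (v 0 j).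
Proof.
have quotient_cst : (fun h : C => h^-1 *: ((h *: v + x) 0 j - x 0 j)) @ 0^' --> v 0 j.
  apply: cvg_near_cst; near=> h; have h0 : h != 0 by near: h; exact: nbhs_dnbhs_neq.
  by rewrite /= !mxE addrK /GRing.scale /= mulrA mulVf // mul1r.
by constructor; [apply/cvg_ex; exists (v 0 j) | apply: cvg_lim].
Unshelve. all: by end_near. Qed.

Lemma is_derive_inv f x v df : f x != 0 -> is_derive x v f df ->
  is_derive x v (fun y => (f y)^-1) (- (f x) ^- 2 * df).
Proof.
move=> fx0 [fd <-]; apply: DeriveDef; first exact: derivableV.
by rewrite deriveV.
Qed.

Lemma is_derive_sumf n (h : 'I_n -> 'rV[C]_2 -> C) x v (dh : 'I_n -> C) :
  (forall i, is_derive x v (h i) (dh i)) ->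
  is_derive x v (fun y => \sum_(i < n) h i y) (\sum_(i < n) dh i).
Proof. by move=> hd; rewrite -fct_sumE; exact: is_derive_sum. Qed.

Lemma is_derive_exprf f n x v df : is_derive x v f df ->
  is_derive x v (fun y => f y ^+ n) (n%:R * f x ^+ n.-1 * df).
Proof.
have -> : (fun y => f y ^+ n) = f ^+ n by apply/funext => y; rewrite exprfctE.
exact: is_deriveX.
Qed.

End Derivatives.

Section HessianMetricCurvature.
Variable C : numFieldType.
Variable D : nat -> nat -> 'rV[C]_2 -> C.
Hypothesis D_derive0 : forall m n x, is_derive x (delta_mx 0 0) (D m n) (D m.+1 n x).
Hypothesis D_derive1 : forall m n x, is_derive x (delta_mx 0 1) (D m n) (D m n.+1 x).
Hypothesis D_continuous : forall m n, continuous (D m n).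

(* [D m n] plays the role of the partial derivative d_0^m d_1^n of a function;
   indexing by multiplicities builds in the symmetry of mixed partials. *)
Definition jet (s : seq 'I_2) : 'rV[C]_2 -> C := D (count_mem 0 s) (count_mem 1 s).

Lemma is_derive_jet s i x : is_derive x (delta_mx 0 i) (jet s) (jet (i :: s) x).
Proof. by case: (ord2P i) => ->; rewrite /jet /= ?add0n ?add1n; [exact: D_derive0 | exact: D_derive1]. Qed.

Lemma pd_jet s i : pd (jet s) i = jet (i :: s).
Proof. by apply/funext => x; case: (is_derive_jet s i x). Qed.

Lemma jet_perm s t : perm_eq s t -> jet s = jet t.
Proof. by move/permP => st; rewrite /jet !st. Qed.

Definition jet_metric (i j : 'I_2) : 'rV[C]_2 -> C := jet [:: i; j].

Definition cubic_mx (i : 'I_2) (y : 'rV[C]_2) : 'M[C]_2 := \matrix_(p, q) jet [:: i; p; q] y.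
Definition quartic_mx (i j : 'I_2) (y : 'rV[C]_2) : 'M[C]_2 :=
  \matrix_(p, q) jet [:: i; j; p; q] y.
Definition christoffel_mx (i : 'I_2) (y : 'rV[C]_2) : 'M[C]_2 :=
  2^-1 *: (invmx (metric_mx jet_metric y) *m cubic_mx i y).

Lemma christoffel_jet_metric l i k :
  christoffel jet_metric l i k = fun y => christoffel_mx i y l k.
Proof.
apply/funext => y; rewrite /christoffel /christoffel_mx !mxE; congr (_ * _).
apply: eq_bigr => m _; rewrite !mxE /jet_metric !pd_jet.
have -> : jet [:: i; k; m] = jet [:: i; m; k] by apply: jet_perm; apply/permP => p /=; lia.
have -> : jet [:: k; i; m] = jet [:: i; m; k] by apply: jet_perm; apply/permP => p /=; lia.
have -> : jet [:: m; i; k] = jet [:: i; m; k] by apply: jet_perm; apply/permP => p /=; lia.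
by rewrite addrK.
Qed.

Lemma is_derive_invmx_metric x i l m : \det (metric_mx jet_metric x) != 0 ->
  is_derive x (delta_mx 0 i) (fun y => invmx (metric_mx jet_metric y) l m)
    (- (invmx (metric_mx jet_metric x) *m cubic_mx i x
        *m invmx (metric_mx jet_metric x)) l m).
Proof.
set G := metric_mx jet_metric => detGx.
pose det y := jet [:: 0; 0] y * jet [:: 1; 1] y - jet [:: 0; 1] y * jet [:: 1; 0] y.
have detGE y : \det (G y) = det y by rewrite det_mx2 !mxE.
pose adj y := (l == m)%:R * (jet [:: 0; 0] y + jet [:: 1; 1] y) - jet [:: l; m] y.
have invGE y : det y != 0 -> invmx (G y) l m = (det y)^-1 * adj y.
  by rewrite -detGE => ?; rewrite invmx2 // mxtrace_mx2 !mxE /adj mulr_natl.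
have det_near : \forall y \near x, det y != 0.
  have det_cont : {for x, continuous det}.
    by apply: continuousB; apply: continuousM; apply: D_continuous.
  by apply: cvgr_neq0 det_cont _; rewrite -detGE.
apply: near_eq_is_derive.
  by near=> y; rewrite invGE //; near: y.
have detx : det x != 0 by rewrite -detGE.
apply: is_derive_eq.
  { apply: is_deriveM; first apply: is_derive_inv detx _.
    all: by repeat first [apply: is_deriveB | apply: is_deriveD | apply: is_deriveM
                       | apply: is_derive_cst | apply: is_derive_jet]. }
move: detx; rewrite invmx2 // detGE mxtrace_mx2 /adj /det.
by case: (ord2P l) => ->; case: (ord2P m) => -> /= ?;
  rewrite ?(mxE, sum_ord2) /GRing.scale /jet_metric /= ?mulr1n ?mulr0n; field.
Unshelve. all: by end_near. Qed.

Lemma is_derive_christoffel_mx x i j l k : \det (metric_mx jet_metric x) != 0 ->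
  is_derive x (delta_mx 0 i) (fun y => christoffel_mx j y l k)
    ((- 2%:R *: (christoffel_mx i x *m christoffel_mx j x)
      + 2^-1 *: (invmx (metric_mx jet_metric x) *m quartic_mx i j x)) l k).
Proof.
move=> detGx.
have -> : (fun y => christoffel_mx j y l k) =
    fun y => 2^-1 * \sum_m invmx (metric_mx jet_metric y) l m * jet [:: j; m; k] y.
  by apply/funext => y; rewrite !mxE; congr (_ * _); apply: eq_bigr => m _; rewrite mxE.
apply: is_derive_eq.
  apply: is_deriveM; apply: is_derive_sumf => m; apply: is_deriveM; last exact: is_derive_jet.
  exact: is_derive_invmx_metric.
by rewrite /christoffel_mx !(mxE, sum_ord2) /GRing.scale /=; field.
Qed.

Lemma curvature_jet_metric x l k i j : \det (metric_mx jet_metric x) != 0 ->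
  curvature jet_metric l k i j x =
  - (christoffel_mx i x *m christoffel_mx j x
     - christoffel_mx j x *m christoffel_mx i x) l k.
Proof.
move=> detGx; rewrite /curvature /pd !christoffel_jet_metric /=.
have dchristoffel i' j' := @derive_val _ _ _ _ _ _ _ (is_derive_christoffel_mx i' j' l k detGx).
have quartic_sym : quartic_mx i j x = quartic_mx j i x.
  by apply/matrixP => p q; rewrite !mxE (@jet_perm _ [:: j; i; p; q]) //; apply/permP => r /=; lia.
have -> : \sum_(m < 2) (christoffel jet_metric l i m x * christoffel jet_metric m j k x
                         - christoffel jet_metric l j m x * christoffel jet_metric m i k x) =
          (christoffel_mx i x *m christoffel_mx j x
           - christoffel_mx j x *m christoffel_mx i x) l k.
  by rewrite !mxE -sumrB; apply: eq_bigr => m _; rewrite !christoffel_jet_metric.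
rewrite !dchristoffel quartic_sym.
set X := _ *m _; set Y := _ *m _; set Z := _ *m _.
by rewrite !mxE /GRing.scale /=; ring.
Qed.

End HessianMetricCurvature.

Section HomogeneousPolynomial.
Variables (C : numFieldType) (d : nat) (a : 'I_d.+1 -> C).
Implicit Types x v : 'rV[C]_2.

(* [k ^_ m] vanishes for [m > k], which neutralizes the truncated [k - m]. *)
Definition hom2_deriv (m n : nat) (y : 'rV[C]_2) : C :=
  \sum_(k < d.+1) a k * ((k ^_ m)%:R * ((d - k) ^_ n)%:R)
                  * (y 0 0 ^+ (k - m) * y 0 1 ^+ (d - k - n)).

Lemma hom2_deriv00 : hom2 a = hom2_deriv 0 0.
Proof.
by apply/funext => y; apply: eq_bigr => k _; rewrite !ffactn0 !subn0 !mulr1 mulrA.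
Qed.

Lemma is_derive_hom2_deriv m n x v : is_derive x v (hom2_deriv m n)
  (v 0 0 * hom2_deriv m.+1 n x + v 0 1 * hom2_deriv m n.+1 x).
Proof.
apply: is_derive_eq.
  apply: is_derive_sumf => k; apply: is_deriveM.
  by apply: is_deriveM; apply: is_derive_exprf; apply: is_derive_coord.
rewrite !mulr_sumr -big_split; apply: eq_bigr => k _ /=.
rewrite !ffactnSr !natrM !subnS /GRing.scale /=; ring.
Qed.

Lemma is_derive_hom2_deriv0 m n x :
  is_derive x (delta_mx 0 0) (hom2_deriv m n) (hom2_deriv m.+1 n x).
Proof.
by apply: is_derive_eq (is_derive_hom2_deriv m n x _) _; rewrite !mxE /= mul1r mul0r addr0.
Qed.

Lemma is_derive_hom2_deriv1 m n x :
  is_derive x (delta_mx 0 1) (hom2_deriv m n) (hom2_deriv m n.+1 x).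
Proof.
by apply: is_derive_eq (is_derive_hom2_deriv m n x _) _; rewrite !mxE /= mul1r mul0r add0r.
Qed.

Lemma hom2_deriv_continuous m n : continuous (hom2_deriv m n).
Proof.
move=> x; apply: differentiable_continuous.
have -> : hom2_deriv m n = \sum_(k < d.+1)
    (cst (a k * ((k ^_ m)%:R * ((d - k) ^_ n)%:R))
     * ((fun y : 'rV[C]_2 => y 0 0) ^+ (k - m) * (fun y : 'rV[C]_2 => y 0 1) ^+ (d - k - n))).
  by apply/funext => y; rewrite fct_sumE; apply: eq_bigr => k _; rewrite /= !exprfctE.
apply: differentiable_sum => k; apply: differentiableM => //.
by apply: differentiableM; [case: (k - m)%N => [|e] | case: (d - k - n)%N => [|e]];
  rewrite ?expr0 //; apply: differentiableX; apply: differentiable_coord.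
Qed.

Lemma hom2_deriv_euler m n x :
  x 0 0 * hom2_deriv m.+1 n x + x 0 1 * hom2_deriv m n.+1 x
  = (d - m - n)%:R * hom2_deriv m n x.
Proof.
rewrite /hom2_deriv !mulr_sumr -big_split; apply: eq_bigr => k _ /=.
have [km|mk] := ltnP k m.
  by rewrite (ffact_small km) (ffact_small (leqW km)); ring.
have [dkn|ndk] := ltnP (d - k) n.
  by rewrite (ffact_small dkn) (ffact_small (leqW dkn)); ring.
have -> : (d - m - n = (k - m) + (d - k - n))%N by have := ltn_ord k; lia.
rewrite natrD !ffactnSr !natrM !subnS.
by case: (k - m)%N => [|i]; case: (d - k - n)%N => [|j] /=; rewrite ?exprS; ring.
Qed.

Lemma hom2_deriv_eq0 m n : (d < m + n)%N -> hom2_deriv m n = 0.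
Proof.
move=> dmn; apply/funext => y; apply: big1 => k _.
have [km|mk] := ltnP k m; first by rewrite ffact_small // mul0r mulr0 mul0r.
by rewrite [(d - k) ^_ n]ffact_small ?mulr0 ?mul0r //; have := ltn_ord k; lia.
Qed.

End HomogeneousPolynomial.

Lemma count_ord2 (s : seq 'I_2) : (count_mem 0%R s + count_mem 1%R s)%N = size s.
Proof. by elim: s => //= p s <-; case: (ord2P p) => -> /=; lia. Qed.

Section HessianMetricHom2.
Variables (C : numFieldType) (d : nat) (a : 'I_d.+1 -> C).
Implicit Types x : 'rV[C]_2.

Definition hessian_jet (m n : nat) (y : 'rV[C]_2) : C :=
  - ((d * (d - 1))%:R)^-1 * hom2_deriv a m n y.

Lemma is_derive_hessian_jet0 m n x :
  is_derive x (delta_mx 0 0) (hessian_jet m n) (hessian_jet m.+1 n x).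
Proof.
apply: is_derive_eq; first by apply: is_deriveM; apply: is_derive_hom2_deriv0.
by rewrite /hessian_jet /GRing.scale /= mulr0 addr0.
Qed.

Lemma is_derive_hessian_jet1 m n x :
  is_derive x (delta_mx 0 1) (hessian_jet m n) (hessian_jet m n.+1 x).
Proof.
apply: is_derive_eq; first by apply: is_deriveM; apply: is_derive_hom2_deriv1.
by rewrite /hessian_jet /GRing.scale /= mulr0 addr0.
Qed.

Lemma hessian_jet_continuous m n : continuous (hessian_jet m n).
Proof.
move=> x; apply: (@continuousM _ _ (cst _) (hom2_deriv a m n));
  [exact: cst_continuous | exact: hom2_deriv_continuous].
Qed.

Lemma hessian_metric_hom2 : hessian_metric d (hom2 a) = jet_metric hessian_jet.
Proof.
apply/funext => i; apply/funext => j; apply/funext => y.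
rewrite /hessian_metric hom2_deriv00 -[hom2_deriv a 0 0]/(jet (hom2_deriv a) [::]).
by rewrite !(pd_jet (is_derive_hom2_deriv0 a) (is_derive_hom2_deriv1 a)).
Qed.

Lemma metric_mx_hessian_metric (f : 'rV[C]_2 -> C) x :
  metric_mx (hessian_metric d f) x = - ((d * (d - 1))%:R)^-1 *: hessian f x.
Proof. by apply/matrixP => i j; rewrite !mxE. Qed.

Lemma jet_hessian_euler s x :
  x 0 0 * jet hessian_jet (0 :: s) x + x 0 1 * jet hessian_jet (1 :: s) x
  = (d - size s)%:R * jet hessian_jet s x.
Proof.
rewrite /jet /hessian_jet /= ?add0n ?add1n -count_ord2 subnDA [RHS]mulrCA -hom2_deriv_euler.
by set c := - _^-1; ring.
Qed.

Lemma jet_hessian_eq0 s : (d < size s)%N -> jet hessian_jet s = 0.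
Proof.
rewrite -count_ord2 => ds; apply/funext => y.
by rewrite /jet /hessian_jet hom2_deriv_eq0 // mulr0.
Qed.

Lemma det_hessian_jet_metric x : (2 <= d)%N -> \det (hessian (hom2 a) x) != 0 ->
  \det (metric_mx (jet_metric hessian_jet) x) != 0.
Proof.
move=> d2 detH; rewrite -hessian_metric_hom2 metric_mx_hessian_metric detZ.
rewrite mulf_neq0 // expf_neq0 // oppr_eq0 invr_eq0 pnatr_eq0 muln_eq0.
by apply/negP; case/orP => /eqP; lia.
Qed.

Lemma christoffel_hessian_euler x : \det (metric_mx (jet_metric hessian_jet) x) != 0 ->
  x 0 0 *: christoffel_mx hessian_jet 0 x + x 0 1 *: christoffel_mx hessian_jet 1 x
  = (2^-1 * (d - 2)%:R)%:M.
Proof.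
move=> detG.
have cubic_euler : x 0 0 *: cubic_mx hessian_jet 0 x + x 0 1 *: cubic_mx hessian_jet 1 x
    = (d - 2)%:R *: metric_mx (jet_metric hessian_jet) x.
  by apply/matrixP => p q; rewrite !mxE jet_hessian_euler.
rewrite /christoffel_mx !scalerA !(mulrC (x 0 _)) -!scalerA -scalerDr.
rewrite !scalemxAr -mulmxDr cubic_euler -scalemxAr mulVmx ?unitmxE ?unitfE //.
by rewrite scalerA scalemx1.
Qed.

Lemma christoffel_hessian_eq0 i x : d = 2%N -> christoffel_mx hessian_jet i x = 0.
Proof.
move=> d2; rewrite /christoffel_mx; have -> : cubic_mx hessian_jet i x = 0.
  by apply/matrixP => p q; rewrite !mxE jet_hessian_eq0 // d2.
by rewrite mulmx0 scaler0.
Qed.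

End HessianMetricHom2.

Theorem lemma6p1 (R : realType) (d : nat) (hd : (2 <= d)%N) (a : 'I_d.+1 -> R[i]) :
  flat_on (hessian_metric d (hom2 a))
          (fun x => \det (hessian (hom2 a) x) != 0).
Proof.
move=> x detH l k i j; have detG := det_hessian_jet_metric hd detH.
rewrite hessian_metric_hom2 (curvature_jet_metric (@is_derive_hessian_jet0 _ _ a)
  (@is_derive_hessian_jet1 _ _ a) (@hessian_jet_continuous _ _ a) _ _ _ _ detG).
have christoffel_commute :
    christoffel_mx (hessian_jet a) 0 x *m christoffel_mx (hessian_jet a) 1 x
    = christoffel_mx (hessian_jet a) 1 x *m christoffel_mx (hessian_jet a) 0 x.
  have [d2|d_neq2] := eqVneq d 2%N.
    by rewrite !christoffel_hessian_eq0 // mulmx0.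
  apply: scalar_lincomb_commute (christoffel_hessian_euler detG).
  by rewrite mulf_neq0 ?invr_eq0 ?pnatr_eq0 //; lia.
(* Generalizing first keeps [rewrite] from unfolding the matrices while matching. *)
move: christoffel_commute; move: (christoffel_mx (hessian_jet a)) => Gamma commute.
by case: (ord2P i) => ->; case: (ord2P j) => ->; rewrite ?commute subrr mxE oppr0.
Qed.
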